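(* Let $\mathfrak{g}$ be a Leibniz algebra whose Schur $\mathrm{Lie}$-multiplier $\mathcal{M}^{\mathrm{Lie}}(\mathfrak{g})$ is finite-dimensional. Then any two $\mathrm{Lie}$-stem covers of $\mathfrak{g}$ are $\mathrm{Lie}$-isoclinic.
   Context: Fix a field $\mathbb{K}$ with $\frac12\in\mathbb{K}$. A Leibniz algebra is a $\mathbb{K}$-vector space with a bilinear bracket satisfying $[x,[y,z]]=[[x,y],z]-[[x,z],y]$. $\mathfrak{p}^{\mathrm{ann}}$ is the span of all $[x,x]$, $\mathfrak{p}_{\mathrm{Lie}}=\mathfrak{p}/\mathfrak{p}^{\mathrm{ann}}$. $[\mathfrak{m},\mathfrak{n}]_{\mathrm{Lie}}$ is the span of all $[m,n]+[n,m]$. $Z_{\mathrm{Lie}}(\mathfrak{p})=\{z:[x,z]+[z,x]=0\ \forall x\}$. An extension $0\to\mathfrak{m}\to\mathfrak{p}\to\mathfrak{g}\to0$ is $\mathrm{Lie}$-central if $\mathfrak{m}\subseteq Z_{\mathrm{Lie}}(\mathfrak{p})$; a $\mathrm{Lie}$-stem extension if moreover $\mathfrak{p}_{\mathrm{Lie}}\to\mathfrak{g}_{\mathrm{Lie}}$ is an isomorphism (equivalently $\mathfrak{m}\subseteq\mathfrak{p}^{\mathrm{ann}}$); a $\mathrm{Lie}$-stem cover if moreover the induced map $\mathcal{M}^{\mathrm{Lie}}(\mathfrak{p})\to\mathcal{M}^{\mathrm{Lie}}(\mathfrak{g})$ is zero. Here for a free presentation $0\to\mathfrak{r}\to\mathfrak{f}\to\mathfrak{g}\to0$,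 $\mathcal{M}^{\mathrm{Lie}}(\mathfrak{g})=\frac{\mathfrak{r}\cap[\mathfrak{f},\mathfrak{f}]_{\mathrm{Lie}}}{[\mathfrak{f},\mathfrak{r}]_{\mathrm{Lie}}}$. For $\mathrm{Lie}$-central extensions $0\to\mathfrak{n}_i\to\mathfrak{g}_i\xrightarrow{\pi_i}\mathfrak{q}_i\to0$ ($i=1,2$), let $C_i:\mathfrak{q}_i\times\mathfrak{q}_i\to[\mathfrak{g}_i,\mathfrak{g}_i]_{\mathrm{Lie}}$, $C_i(\pi_i(x),\pi_i(y))=[x,y]+[y,x]$ (well defined). The extensions are $\mathrm{Lie}$-isoclinic if there are isomorphisms $\eta:\mathfrak{q}_1\to\mathfrak{q}_2$ and $\xi:[\mathfrak{g}_1,\mathfrak{g}_1]_{\mathrm{Lie}}\to[\mathfrak{g}_2,\mathfrak{g}_2]_{\mathrm{Lie}}$ with $\xi\circ C_1=C_2\circ(\eta\times\eta)$. *)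

(* Leibniz algebras over a field K (char K <> 2 is a
   hypothesis of the main theorem), possibly infinite-dimensional. *)
From HB Require Import structures.
From mathcomp Require Import all_boot all_algebra.
Set Implicit Arguments. Unset Strict Implicit. Unset Printing Implicit Defensive.
Import GRing.Theory.
Local Open Scope ring_scope.

(* (Right) Leibniz algebra: bilinear bracket with
   [x,[y,z]] = [[x,y],z] - [[x,z],y]. *)
Record leibniz (K : fieldType) := Leibniz {
  lcarrier :> lmodType K;
  lbr : lcarrier -> lcarrier -> lcarrier;
  lbr_linl : forall (a : K) (x y z : lcarrier),
      lbr (a *: x + y) z = a *: lbr x z + lbr y z;
  lbr_linr : forall (a : K) (x y z : lcarrier),
      lbr z (a *: x + y) = a *: lbr z x + lbr z y;
  lbr_leibniz : forall x y z : lcarrier,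
      lbr x (lbr y z) = lbr (lbr x y) z - lbr (lbr x z) y }.
Arguments lbr {K} l _ _.

Section Defs.
Variable K : fieldType.

Inductive span (V : lmodType K) (S : V -> Prop) : V -> Prop :=
  | span0 : span S 0
  | spanS (a : K) (x v : V) : S x -> span S v -> span S (a *: x + v).

Definition surj (A B : Type) (f : A -> B) : Prop := forall y, exists x, f x = y.

Definition lhom (A B : leibniz K) (f : A -> B) : Prop :=
  (forall (a : K) (x y : A), f (a *: x + y) = a *: f x + f y) /\
  (forall x y : A, f (lbr A x y) = lbr B (f x) (f y)).

Definition lker (A B : leibniz K) (f : A -> B) : A -> Prop := fun v => f v = 0.

Definition ann (A : leibniz K) : A -> Prop :=
  span (fun v : A => exists x : A, v = lbr A x x).

Definition lie_comm (A : leibniz K) (M N : A -> Prop) : A -> Prop :=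
  span (fun v : A => exists m n, M m /\ N n /\ v = lbr A m n + lbr A n m).

Definition setT_ (A : leibniz K) : A -> Prop := fun _ => True.
Arguments setT_ A : clear implicits.

Definition lie_center (A : leibniz K) : A -> Prop :=
  fun z => forall x : A, lbr A x z + lbr A z x = 0.

Definition is_free (F : leibniz K) (X : Type) (i : X -> F) : Prop :=
  forall (L : leibniz K) (h : X -> L),
    exists f : F -> L, (lhom f /\ forall x, f (i x) = h x) /\
      forall g : F -> L, lhom g -> (forall x, g (i x) = h x) ->
        forall v, g v = f v.

Definition free_pres (F A : leibniz K) (phi : F -> A) : Prop :=
  (exists (X : Type) (i : X -> F), @is_free F X i) /\ lhom phi /\ surj phi.

(* The Lie-multiplier (R cap [F,F]_Lie)/[F,R]_Lie of the presentation phi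
   (R = ker phi) is finite-dimensional. *)
Definition multiplier_findim (F A : leibniz K) (phi : F -> A) : Prop :=
  let R := lker phi in
  exists ws : seq F,
    (forall w, w \in ws -> R w /\ lie_comm (setT_ F) (setT_ F) w) /\
    forall v, R v -> lie_comm (setT_ F) (setT_ F) v ->
      exists u w, span (fun x => x \in ws) u /\ lie_comm (setT_ F) R w /\
                  v = u + w.

Definition lie_multiplier_findim (G : leibniz K) : Prop :=
  exists (F : leibniz K) (phi : F -> G), free_pres phi /\ multiplier_findim phi.

Definition lie_extension (P G : leibniz K) (pi : P -> G) : Prop :=
  lhom pi /\ surj pi.

Definition lie_central (P G : leibniz K) (pi : P -> G) : Prop :=
  lie_extension pi /\ forall v, lker pi v -> lie_center v.

(* Lie-stem: kernel contained in p^ann (equivalent to P_Lie ~ G_Lie). *)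
Definition lie_stem (P G : leibniz K) (pi : P -> G) : Prop :=
  lie_central pi /\ forall v, lker pi v -> ann v.

(* Lie-stem cover: the induced map M^Lie(P) -> M^Lie(G) is zero.  For a free
   presentation phi : F -> P with kernel S, pi o phi is a free presentation
   of G with kernel R containing S, and the induced map is
   (S cap [F,F]_Lie)/[F,S]_Lie -> (R cap [F,F]_Lie)/[F,R]_Lie, v |-> v. *)
Definition lie_stem_cover (P G : leibniz K) (pi : P -> G) : Prop :=
  lie_stem pi /\
  forall (F : leibniz K) (phi : F -> P), free_pres phi ->
    forall v, lker phi v -> lie_comm (setT_ F) (setT_ F) v ->
      lie_comm (setT_ F) (lker (fun x => pi (phi x))) v.

Definition lie_isoclinic (G1 Q1 G2 Q2 : leibniz K)
    (pi1 : G1 -> Q1) (pi2 : G2 -> Q2) : Prop :=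
  let D1 := lie_comm (setT_ G1) (setT_ G1) in
  let D2 := lie_comm (setT_ G2) (setT_ G2) in
  exists (eta : Q1 -> Q2) (xi : G1 -> G2),
    (lhom eta /\ injective eta /\ surj eta) /\
    ((forall (a : K) x y, D1 x -> D1 y -> xi (a *: x + y) = a *: xi x + xi y) /\
     (forall x y, D1 x -> D1 y -> xi (lbr G1 x y) = lbr G2 (xi x) (xi y)) /\
     (forall x, D1 x -> D2 (xi x)) /\
     (forall x y, D1 x -> D1 y -> xi x = xi y -> x = y) /\
     (forall z, D2 z -> exists x, D1 x /\ xi x = z)) /\
    (* xi o C_1 = C_2 o (eta x eta) *)
    (forall (x y : G1) (x' y' : G2),
       pi2 x' = eta (pi1 x) -> pi2 y' = eta (pi1 y) ->
       xi (lbr G1 x y + lbr G1 y x) = lbr G2 x' y' + lbr G2 y' x').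

End Defs.
Arguments setT_ {K} A : rename.

(* Fix a free presentation phi : F -> G.  The kernel of a Lie-stem extension
   pi : P -> G is Lie-central and lies in P^ann; since [k,k] = 0 for Lie-central
   k when 2 is invertible, [x,x] only depends on x modulo that kernel, so phi
   lifts to a surjection psi : F -> P with pi psi = phi.  For two Lie-stem
   covers, the cover condition puts every w in [F,F]_Lie killed by psi1 into
   [F, ker phi]_Lie, which psi2 kills because ker pi2 is Lie-central, and
   symmetrically.  Hence psi1 w |-> psi2 w is a well-defined bijection
   [P1,P1]_Lie -> [P2,P2]_Lie which, together with eta = id, is a
   Lie-isoclinism. *)
From HB Require Import structures.
From mathcomp Require Import all_boot all_algebra.
From Stdlib Require Import ClassicalEpsilon.
Set Implicit Arguments. Unset Strict Implicit. Unset Printing Implicit Defensive.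
Import GRing.Theory.
Local Open Scope ring_scope.

Lemma exists_factor (A B C : Type) (S : A -> Prop) (f : A -> B) (g : A -> C) :
    inhabited C -> (forall a a', S a -> S a' -> f a = f a' -> g a = g a') ->
  exists h : B -> C, forall a, S a -> h (f a) = g a.
Proof.
move=> [c] g_wd.
have [h hP] : exists h : B -> C, forall b a, S a -> f a = b -> h b = g a.
  apply: (choice (fun b c => forall a, S a -> f a = b -> c = g a)) => b.
  case: (excluded_middle_informative (exists a, S a /\ f a = b)).
  - by move=> [a [Sa <-]]; exists (g a) => a' Sa' /esym; apply: g_wd.
  - by move=> none; exists c => a Sa fa; case: none; exists a.
by exists h => a Sa; apply: hP.
Qed.

Section Span.
Variable K : fieldType.

Section Closure.
Variables (V : lmodType K) (S : V -> Prop).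

Lemma span_gen x : S x -> span S x.
Proof. by move=> Sx; rewrite -[x]addr0 -[x]scale1r; apply: spanS => //; apply: span0. Qed.

Lemma span_add u v : span S u -> span S v -> span S (u + v).
Proof.
elim=> [|a x w Sx _ IH] Sv; first by rewrite add0r.
by rewrite -addrA; apply: spanS => //; apply: IH.
Qed.

Lemma span_scale b v : span S v -> span S (b *: v).
Proof.
elim=> [|a x w Sx _ IH]; first by rewrite scaler0; apply: span0.
by rewrite scalerDr scalerA; apply: spanS.
Qed.

Lemma span_sub u v : span S u -> span S v -> span S (u - v).
Proof. by move=> Su Sv; rewrite -scaleN1r; apply/span_add/span_scale. Qed.

End Closure.

Section SpanLinear.
Variables (V W : lmodType K) (f : V -> W).
Hypothesis f_lin : linear f.
HB.instance Definition _ := GRing.isLinear.Build K V W *:%R f f_lin.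

Lemma span_map (S : V -> Prop) (T : W -> Prop) v :
  (forall x, S x -> T (f x)) -> span S v -> span T (f v).
Proof.
move=> ST; elim=> [|a x w Sx _ IH]; first by rewrite linear0; apply: span0.
by rewrite f_lin; apply: spanS => //; apply: ST.
Qed.

Lemma span_kernel (S : V -> Prop) v : (forall x, S x -> f x = 0) -> span S v -> f v = 0.
Proof.
by move=> S0; elim=> [|a x w Sx _ IH]; rewrite ?linear0 // f_lin IH S0 // scaler0 addr0.
Qed.

Lemma span_preimage (S : V -> Prop) (T : W -> Prop) z :
    (forall t, T t -> exists x, S x /\ f x = t) -> span T z ->
  exists v, span S v /\ f v = z.
Proof.
move=> TS; elim=> [|a t w Tt _ [v [Sv <-]]].
  by exists 0; split; [apply: span0 | rewrite linear0].
have [x [Sx <-]] := TS t Tt.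
by exists (a *: x + v); split; [apply: spanS | rewrite f_lin].
Qed.

End SpanLinear.
End Span.

Definition lie_derived (K : fieldType) (A : leibniz K) : A -> Prop :=
  lie_comm (setT_ A) (setT_ A).

Section LeibnizAlgebra.
Variables (K : fieldType) (A : leibniz K).

Lemma lbrDl x y z : lbr A (x + y) z = lbr A x z + lbr A y z.
Proof. by rewrite -[x]scale1r lbr_linl !scale1r. Qed.

Lemma lbrDr x y z : lbr A z (x + y) = lbr A z x + lbr A z y.
Proof. by rewrite -[x]scale1r lbr_linr !scale1r. Qed.

Lemma lbr_sym_addl x y z : lbr A (x + y) z + lbr A z (x + y) =
  (lbr A x z + lbr A z x) + (lbr A y z + lbr A z y).
Proof. by rewrite lbrDl lbrDr addrACA. Qed.

(* By the Leibniz identity, [x,[m,n]] and [x,[n,m]] expand into opposite terms. *)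
Lemma lbr_derived_r0 x y : lie_derived y -> lbr A x y = 0.
Proof.
apply: span_kernel => [a u v|_ [m [n [_ [_ ->]]]]]; first exact: lbr_linr.
by rewrite lbrDr !lbr_leibniz addrA subrK subrr.
Qed.

Lemma lbr_sym_add_center x y k l : lie_center k -> lie_center l ->
  lbr A (x + k) (y + l) + lbr A (y + l) (x + k) = lbr A x y + lbr A y x.
Proof.
move=> Zk Zl; rewrite lbr_sym_addl [lbr A k _ + _]addrC Zk addr0.
by rewrite addrC lbr_sym_addl [lbr A l _ + _]addrC Zl addr0 addrC.
Qed.

Hypothesis two_neq0 : (2%:R : K) != 0.

Lemma lie_center_lbr_sq k : lie_center k -> lbr A k k = 0.
Proof.
move=> Zk; have := Zk k; rewrite -mulr2n -scaler_nat => /eqP.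
by rewrite scaler_eq0 (negbTE two_neq0) => /eqP.
Qed.

Lemma lbr_sq_add_center x k : lie_center k -> lbr A (x + k) (x + k) = lbr A x x.
Proof.
move=> Zk; rewrite !lbrDl !lbrDr (lie_center_lbr_sq Zk) addr0.
by rewrite -addrA Zk addr0.
Qed.

End LeibnizAlgebra.

Section Homomorphism.
Variables (K : fieldType) (A B : leibniz K) (f : A -> B).
Hypothesis f_hom : lhom f.
HB.instance Definition _ := GRing.isLinear.Build K A B *:%R f f_hom.1.

Lemma lie_derived_image w : lie_derived w -> lie_derived (f w).
Proof.
apply: span_map; first exact: f_hom.1.
move=> _ [m [n [_ [_ ->]]]]; exists (f m), (f n).
by do 2!split=> //; rewrite -!f_hom.2 linearD.
Qed.

Lemma lie_derived_preimage z : surj f -> lie_derived z ->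
  exists w, lie_derived w /\ f w = z.
Proof.
move=> f_surj; apply: span_preimage; first exact: f_hom.1.
move=> _ [m [n [_ [_ ->]]]]; have [u <-] := f_surj m; have [v <-] := f_surj n.
by exists (lbr A u v + lbr A v u); split; [exists u, v | rewrite -!f_hom.2 linearD].
Qed.

End Homomorphism.

Section DerivedKernel.
Variables (K : fieldType) (F P Q : leibniz K) (f : F -> P) (g : F -> Q).
Hypotheses (f_hom : lhom f) (g_hom : lhom g).
Hypothesis ker_fg : forall w, lie_derived w -> f w = 0 -> g w = 0.
HB.instance Definition _ := GRing.isLinear.Build K F P *:%R f f_hom.1.
HB.instance Definition _ := GRing.isLinear.Build K F Q *:%R g g_hom.1.

Lemma derived_ker_sub_eq w w' : lie_derived w -> lie_derived w' ->
  f w = f w' -> g w = g w'.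
Proof.
move=> Dw Dw' E; apply/eqP; rewrite -subr_eq0 -linearB; apply/eqP/ker_fg.
  exact: span_sub.
by rewrite linearB /= E subrr.
Qed.

End DerivedKernel.

Lemma lhom_comp (K : fieldType) (A B C : leibniz K) (f : A -> B) (g : B -> C) :
  lhom f -> lhom g -> lhom (fun x => g (f x)).
Proof.
move=> [f_lin f_br] [g_lin g_br]; split=> [a x y|x y]; first by rewrite f_lin g_lin.
by rewrite f_br g_br.
Qed.

Section Free.
Variables (K : fieldType) (F : leibniz K) (X : Type) (i : X -> F).
Hypothesis F_free : is_free i.

Lemma free_hom_eq (L : leibniz K) (g1 g2 : F -> L) :
  lhom g1 -> lhom g2 -> (forall x, g1 (i x) = g2 (i x)) -> forall v, g1 v = g2 v.
Proof.
move=> g1_hom g2_hom g12 v; have [f [_ f_uniq]] := F_free (fun x => g2 (i x)).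
by rewrite (f_uniq g1 g1_hom g12) (f_uniq g2 g2_hom (fun=> erefl)).
Qed.

Lemma free_lift (P G : leibniz K) (phi : F -> G) (pi : P -> G) :
    lhom phi -> lhom pi -> surj pi ->
  exists psi : F -> P, lhom psi /\ forall v, pi (psi v) = phi v.
Proof.
move=> phi_hom pi_hom pi_surj.
have [s sK] := choice (fun y p => pi p = y) pi_surj.
have [psi [[psi_hom psi_i] _]] := F_free (fun x => s (phi (i x))).
exists psi; split=> //; apply: free_hom_eq => //; first exact: lhom_comp.
by move=> x; rewrite psi_i sK.
Qed.

End Free.

Section StemLift.
Variables (K : fieldType) (P G F : leibniz K) (pi : P -> G) (psi : F -> P).
Hypotheses (two_neq0 : (2%:R : K) != 0) (pi_stem : lie_stem pi) (psi_hom : lhom psi).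
HB.instance Definition _ := GRing.isLinear.Build K F P *:%R psi psi_hom.1.
HB.instance Definition _ :=
  GRing.isLinear.Build K P G *:%R pi pi_stem.1.1.1.1.

Lemma lbr_sq_in_image (x : P) : (exists u, pi (psi u) = pi x) ->
  exists u, psi u = lbr P x x.
Proof.
move=> [u pi_u]; have Zk : lie_center (x - psi u).
  by apply: pi_stem.1.2; rewrite /lker linearB /= pi_u subrr.
exists (lbr F u u); rewrite psi_hom.2 -(lbr_sq_add_center two_neq0 (psi u) Zk).
by rewrite addrC subrK.
Qed.

Lemma stem_lift_surj : surj (fun v => pi (psi v)) -> surj psi.
Proof.
move=> comp_surj p; have [u pi_u] := comp_surj (pi p).
have ker_p : lker pi (p - psi u) by rewrite /lker linearB /= pi_u subrr.
have sq_in_image t : (exists x, t = lbr P x x) -> exists u', True /\ psi u' = t.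
  by move=> [x ->]; have [u' ?] := lbr_sq_in_image (comp_surj (pi x)); exists u'.
have [v [_ psi_v]] := span_preimage psi_hom.1 sq_in_image (pi_stem.2 _ ker_p).
by exists (v + u); rewrite linearD /= psi_v subrK.
Qed.

End StemLift.

Lemma free_pres_lift (K : fieldType) (two_neq0 : (2%:R : K) != 0)
    (F G P : leibniz K) (X : Type) (i : X -> F) (phi : F -> G) (pi : P -> G) :
    is_free i -> lhom phi -> surj phi -> lie_stem pi ->
  exists psi : F -> P, free_pres psi /\ forall v, pi (psi v) = phi v.
Proof.
move=> F_free phi_hom phi_surj pi_stem.
have [[pi_hom pi_surj] _] := pi_stem.1.
have [psi [psi_hom pi_psi]] := free_lift F_free phi_hom pi_hom pi_surj.
exists psi; split=> //; split; first by exists X, i.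
split=> //; apply: stem_lift_surj two_neq0 pi_stem psi_hom _ => y.
by have [v <-] := phi_surj y; exists v.
Qed.

Section CoverKernel.
Variables (K : fieldType) (F G P1 P2 : leibniz K) (phi : F -> G).
Variables (pi1 : P1 -> G) (pi2 : P2 -> G) (psi1 : F -> P1) (psi2 : F -> P2).
Hypotheses (pi1_cover : lie_stem_cover pi1) (psi1_pres : free_pres psi1).
Hypotheses (pi2_central : lie_central pi2) (psi2_hom : lhom psi2).
Hypotheses (pi_psi1 : forall v, pi1 (psi1 v) = phi v).
Hypotheses (pi_psi2 : forall v, pi2 (psi2 v) = phi v).
HB.instance Definition _ := GRing.isLinear.Build K F P2 *:%R psi2 psi2_hom.1.

Lemma stem_cover_derived_ker w : lie_derived w -> psi1 w = 0 -> psi2 w = 0.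
Proof.
move=> Dw psi1_w; have := pi1_cover.2 F psi1 psi1_pres w psi1_w Dw.
apply: span_kernel; first exact: psi2_hom.1.
move=> _ [m [n [_ [ker_n ->]]]]; rewrite linearD /= !psi2_hom.2.
by apply: pi2_central.2; rewrite /lker pi_psi2 -pi_psi1.
Qed.

End CoverKernel.

Section Isoclinism.
Variables (K : fieldType) (F G P1 P2 : leibniz K).
Variables (pi1 : P1 -> G) (pi2 : P2 -> G) (psi1 : F -> P1) (psi2 : F -> P2).
Hypotheses (psi1_hom : lhom psi1) (psi2_hom : lhom psi2).
Hypotheses (psi1_surj : surj psi1) (psi2_surj : surj psi2).
Hypothesis pi2_central : lie_central pi2.
Hypothesis pi_psi : forall v, pi1 (psi1 v) = pi2 (psi2 v).
Hypothesis ker12 : forall w, lie_derived w -> psi1 w = 0 -> psi2 w = 0.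
Hypothesis ker21 : forall w, lie_derived w -> psi2 w = 0 -> psi1 w = 0.
HB.instance Definition _ := GRing.isLinear.Build K F P1 *:%R psi1 psi1_hom.1.
HB.instance Definition _ := GRing.isLinear.Build K F P2 *:%R psi2 psi2_hom.1.
HB.instance Definition _ :=
  GRing.isLinear.Build K P2 G *:%R pi2 pi2_central.1.1.1.

Section Xi.
Variable xi : P1 -> P2.
Hypothesis xi_psi : forall w, lie_derived w -> xi (psi1 w) = psi2 w.

Lemma xi_linear a x y : lie_derived x -> lie_derived y ->
  xi (a *: x + y) = a *: xi x + xi y.
Proof.
move=> /(lie_derived_preimage psi1_hom psi1_surj) [w [Dw <-]].
move=> /(lie_derived_preimage psi1_hom psi1_surj) [w' [Dw' <-]].
rewrite -psi1_hom.1 !xi_psi // ?psi2_hom.1 //.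
by apply: span_add => //; apply: span_scale.
Qed.

Lemma xi_derived x : lie_derived x -> lie_derived (xi x).
Proof.
move=> /(lie_derived_preimage psi1_hom psi1_surj) [w [Dw <-]].
by rewrite xi_psi //; apply: lie_derived_image.
Qed.

Lemma xi_lbr x y : lie_derived x -> lie_derived y ->
  xi (lbr P1 x y) = lbr P2 (xi x) (xi y).
Proof.
move=> _ Dy; rewrite (lbr_derived_r0 _ Dy) (lbr_derived_r0 _ (xi_derived Dy)).
by rewrite -(linear0 psi1) xi_psi ?linear0 //; apply: span0.
Qed.

Lemma xi_inj x y : lie_derived x -> lie_derived y -> xi x = xi y -> x = y.
Proof.
move=> /(lie_derived_preimage psi1_hom psi1_surj) [w [Dw <-]].
move=> /(lie_derived_preimage psi1_hom psi1_surj) [w' [Dw' <-]].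
by rewrite !xi_psi // => /(derived_ker_sub_eq psi2_hom psi1_hom ker21 Dw Dw').
Qed.

Lemma xi_surj z : lie_derived z -> exists x, lie_derived x /\ xi x = z.
Proof.
move=> /(lie_derived_preimage psi2_hom psi2_surj) [w [Dw <-]].
by exists (psi1 w); split; [apply: lie_derived_image | apply: xi_psi].
Qed.

Lemma xi_lbr_sym (x y : P1) (x' y' : P2) : pi2 x' = pi1 x -> pi2 y' = pi1 y ->
  xi (lbr P1 x y + lbr P1 y x) = lbr P2 x' y' + lbr P2 y' x'.
Proof.
have [u <-] := psi1_surj x; have [v <-] := psi1_surj y.
rewrite pi_psi => pi_u; rewrite pi_psi => pi_v.
have central_diff t t' : pi2 t' = pi2 t -> lie_center (t - t').
  by move=> E; apply: pi2_central.2; rewrite /lker linearB /= E subrr.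
rewrite -!psi1_hom.2 -linearD xi_psi; last by apply: span_gen; exists u, v.
rewrite linearD /= !psi2_hom.2.
rewrite -[psi2 u](subrK x') -[psi2 v](subrK y') [_ - x' + _]addrC [_ - y' + _]addrC.
by apply: lbr_sym_add_center; apply: central_diff.
Qed.

End Xi.

Lemma lie_isoclinic_of_lifts : lie_isoclinic pi1 pi2.
Proof.
have [xi xi_psi] :=
  exists_factor (inhabits (0 : P2)) (derived_ker_sub_eq psi1_hom psi2_hom ker12).
exists (fun q => q), xi; split; last split.
- by split; [split | split=> // q; exists q].
- split; first exact: xi_linear.
  split; first exact: xi_lbr.
  split; first exact: xi_derived.
  by split; [exact: xi_inj | exact: xi_surj].
- exact: xi_lbr_sym.
Qed.

End Isoclinism.

Theorem mainTheorem13 (K : fieldType) (hK : (2%:R : K) != 0)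
    (G : leibniz K) (hM : lie_multiplier_findim G)
    (P1 P2 : leibniz K) (pi1 : P1 -> G) (pi2 : P2 -> G) :
  lie_stem_cover pi1 -> lie_stem_cover pi2 -> lie_isoclinic pi1 pi2.
Proof.
move=> cover1 cover2.
have [F [phi [[[X [i F_free]] [phi_hom phi_surj]] _]]] := hM.
have [psi1 [pres1 pi_psi1]] := free_pres_lift hK F_free phi_hom phi_surj cover1.1.
have [psi2 [pres2 pi_psi2]] := free_pres_lift hK F_free phi_hom phi_surj cover2.1.
apply: (lie_isoclinic_of_lifts pres1.2.1 pres2.2.1 pres1.2.2 pres2.2.2 cover2.1.1).
- by move=> v; rewrite pi_psi1 pi_psi2.
- exact: (stem_cover_derived_ker cover1 pres1 cover2.1.1 pres2.2.1 pi_psi1 pi_psi2).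
- exact: (stem_cover_derived_ker cover2 pres2 cover1.1.1 pres1.2.1 pi_psi2 pi_psi1).
Qed.
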